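(* Let $(D,H,P)$ be a market, and let $(\iota,\kappa)$ be an interview arrangement that is adequate at $P$. Let $\kappa'=(\kappa'_d)_{d\in D}$ be doctor interview capacities such that $\kappa'_d\ge \kappa_d$ for every $d\in D$. Let $\mu$ be the $(\iota,\kappa)$-matching and $\mu'$ the $(\iota,\kappa')$-matching at $P$. Then no doctor prefers $\mu'$ to $\mu$; that is, for every $d\in D$, $\mu(d)\mathrel{R_d}\mu'(d)$ (where $R_d$ is the weak relation associated with $P_d$).
   Context: A market is a triple $(D,H,P)$ where $D$ (doctors) and $H$ (hospitals) are finite sets with $|D|\ge 2$, $|H|\ge 2$; each $h\in H$ has a strict preference $P_h$ over $D\cup\{h\}$ and each $d\in D$ has a strict preference $P_d$ over $H\cup\{d\}$ (being matched to oneself means being unmatched; a partner ranked below oneself is unacceptable). A matching is $\mu:H\cup D\to H\cup D$ with $\mu(h)\in D\cup\{h\}$, $\mu(d)\in H\cup\{d\}$, and $\mu(d)=h$ iff $\mu(h)=d$. A pair $(d,h)$ blocks $\mu$ if $h\mathrel{P_d}\mu(d)$ and $d\mathrel{P_h}\mu(h)$; $\mu$ is stable if it has no blocking pair. An interview arrangement is $(\iota,\kappa)$ with $\iota_h\in\mathbb N$ the interview capacity of each $h\in H$ and $\kappa_d\in\mathbb N$ that of each $d\in D$. An interview matching is a many-to-many matching $\nu$ ($\nu(d)\subseteq H$, $\nu(h)\subseteq D$, $h\in\nu(d)$ iff $d\in\nu(h)$) with $|\nu(d)|\le\kappa_d$ and $|\nu(h)|\le\iota_h$. The $(\iota,\kappa)$-matching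 at $P$ is obtained in two steps. Step 1: $\nu$ is the hospital-optimal pairwise stable interview matching, computed by hospital-proposing deferred acceptance in which each agent's choice function from a set of proposals selects its acceptable partners in that set if there are at most its capacity of them, and otherwise its capacity-many best ones according to its preference (responsive, acceptant choice). Step 2: the final matching is the outcome of doctor-proposing deferred acceptance with each agent's preference restricted to $\nu$ (each agent $i$ ranks only the agents in $\nu(i)$, in the order given by $P_i$ and only if acceptable to $i$; all others are unacceptable). $(\iota,\kappa)$ is adequate at $P$ if the $(\iota,\kappa)$-matching at $P$ is stable with respect to the true preferences $P$. *)

From mathcomp Require Import all_boot.
Set Implicit Arguments. Unset Strict Implicit. Unset Printing Implicit Defensive.

(* Preferences are encoded by rank functions: for an agent [i] whose potential
   partners live in [Y], [rk i : option Y -> nat] ranks every potential partner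
   ([Some y]) and "being unmatched" ([None], i.e. matched to oneself).
   Smaller rank = more preferred.  A strict preference is an injective rank
   function.  [y] is acceptable to [i] iff [rk i (Some y) < rk i None]. *)

Section DA.
Variables (X Y : finType).
Variables (capX : X -> nat) (rkX : X -> option Y -> nat).
Variables (capY : Y -> nat) (rkY : Y -> option X -> nat).

(* Responsive, acceptant choice: from a set S of offers, keep the acceptable
   ones that have fewer than [cap] acceptable offers in S strictly better;
   i.e. all acceptable ones if at most [cap], else the [cap] best. *)
Definition choice (Z : finType) (cap : nat) (rk : option Z -> nat)
  (S : {set Z}) : {set Z} :=
  [set z in S | (rk (Some z) < rk None) &&
     (#|[set z' in S | (rk (Some z') < rk None) && (rk (Some z') < rk (Some z))]| < cap)].

(* Given the set R of pairs (x,y) in which y has rejected x, the proposals. *)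
Definition da_proposals (R : {set X * Y}) : {set X * Y} :=
  [set p | p.2 \in choice (capX p.1) (rkX p.1) [set y | (p.1, y) \notin R]].

Definition da_held (R : {set X * Y}) : {set X * Y} :=
  [set p in da_proposals R |
     p.1 \in choice (capY p.2) (rkY p.2) [set x | (x, p.2) \in da_proposals R]].

Definition da_step (R : {set X * Y}) : {set X * Y} :=
  R :|: (da_proposals R :\: da_held R).

(* Each non-stationary round adds a new rejected pair, so after #|X * Y|
   rounds the process has terminated; the outcome is the held proposals. *)
Definition da_rejections : {set X * Y} := iter #|[set: X * Y]| da_step set0.

Definition deferred_acceptance : {set X * Y} := da_held da_rejections.
End DA.

Section Market.
Variables (D H : finType).
Variables (PH : H -> option D -> nat) (PD : D -> option H -> nat).

(* Step 1: hospital-proposing DA for interviews; nu contains pairs (h, d). *)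
Definition interview_matching (iota : H -> nat) (kappa : D -> nat) : {set H * D} :=
  deferred_acceptance iota PH kappa PD.

(* Preferences restricted to the interview matching: partners outside nu
   become unacceptable (ranked below the outside option, keeping strictness). *)
Definition restrictD (nu : {set H * D}) (d : D) (o : option H) : nat :=
  match o with
  | Some h => if (h, d) \in nu then PD d (Some h) else PD d None + 1 + PD d (Some h)
  | None => PD d None
  end.

Definition restrictH (nu : {set H * D}) (h : H) (o : option D) : nat :=
  match o with
  | Some d => if (h, d) \in nu then PH h (Some d) else PH h None + 1 + PH h (Some d)
  | None => PH h None
  end.

(* Step 2: doctor-proposing (one-to-one) DA with restricted preferences.
   Result: set of matched pairs (d, h). *)
Definition iota_kappa_matching (iota : H -> nat) (kappa : D -> nat) : {set D * H} :=
  let nu := interview_matching iota kappa in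
  deferred_acceptance (fun _ => 1%N) (restrictD nu) (fun _ => 1%N) (restrictH nu).

Definition partnerD (mu : {set D * H}) (d : D) : option H := [pick h | (d, h) \in mu].
Definition partnerH (mu : {set D * H}) (h : H) : option D := [pick d | (d, h) \in mu].

Definition is_matching (mu : {set D * H}) : Prop :=
  (forall d h h', (d, h) \in mu -> (d, h') \in mu -> h = h') /\
  (forall h d d', (d, h) \in mu -> (d', h) \in mu -> d = d').

Definition blocks (mu : {set D * H}) (d : D) (h : H) : bool :=
  (PD d (Some h) < PD d (partnerD mu d)) && (PH h (Some d) < PH h (partnerH mu h)).

Definition stable (mu : {set D * H}) : Prop :=
  is_matching mu /\ forall d h, ~~ blocks mu d h.

Definition adequate (iota : H -> nat) (kappa : D -> nat) : Prop :=
  stable (iota_kappa_matching iota kappa).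
End Market.

(* Let S be the set of doctors who strictly prefer their (iota, kappa')-partner
   to their (iota, kappa)-partner.  Raising doctors' interview capacities can only
   cost a hospital interviews if it fills its capacity with doctors it prefers.
   Hence, for d in S with h = mu'(d), stability of mu yields a doctor d' = mu(h)
   whom h prefers to d, h still interviews d' under kappa', and stability of mu'
   within its interviews puts d' in S.  So d |-> mu(mu'(d)) injects S into
   itself, every d in S is matched by mu, and d also interviews mu'(d) under
   kappa.  The classical argument that doctor-proposing deferred acceptance never
   rejects a partner of this kind then shows that mu(d) is at least as good as
   mu'(d) for d in S, a contradiction. *)

From mathcomp Require Import all_boot.
Set Implicit Arguments. Unset Strict Implicit. Unset Printing Implicit Defensive.

Section ExtensiveIteration.
Variables (T : finType) (F : {set T} -> {set T}).
Hypothesis F_ext : forall A : {set T}, A \subset F A.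

Lemma subset_iter_ext : {homo (fun i => iter i F set0) : i j / i <= j >-> i \subset j}.
Proof.
by apply: homo_leq => [//|? ? ?|i]; [apply: subset_trans | apply: F_ext].
Qed.

Lemma iter_ext_fixed : F (iter #|T| F set0) = iter #|T| F set0.
Proof.
set iterF := fun i => iter i F set0.
suff /'exists_eqP[k /= e]: [exists k : 'I_#|T|.+1, iterF k.+1 == iterF k].
  by rewrite -(subnK (leq_ord k)) iterD iter_fix.
apply: contraT => /existsPn /(_ (Ordinal _)) /= neq_iter.
suff iter_big k : k <= #|T|.+1 -> k <= #|iterF k|.
  by have := iter_big _ (leqnn _); rewrite ltnNge max_card.
elim: k => // k IHk k_lt; apply: (leq_ltn_trans (IHk (ltnW k_lt))).
by rewrite proper_card // properEneq eq_sym neq_iter // F_ext.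
Qed.

Lemma iter_ext_ind (P : {set T} -> Prop) : P set0 ->
  (forall A : {set T}, A \subset iter #|T| F set0 -> P A -> P (F A)) ->
  P (iter #|T| F set0).
Proof.
move=> P0 PF; suff: forall k, k <= #|T| -> P (iter k F set0) by apply.
elim=> // k IHk k_lt; apply: PF (IHk (ltnW k_lt)).
exact: subset_iter_ext (ltnW k_lt).
Qed.

End ExtensiveIteration.

Section Preferred.
Variables (Z : finType) (rk : option Z -> nat).
Implicit Types S A B : {set Z}.

Definition acceptable_in S := [set z in S | rk (Some z) < rk None].

Lemma in_acceptable_in S z : (z \in acceptable_in S) = (z \in S) && (rk (Some z) < rk None).
Proof. by rewrite inE. Qed.

Lemma acceptable_inS S S' : S' \subset S -> acceptable_in S' \subset acceptable_in S.
Proof. by move=> /subsetP sub; apply/subsetP => z; rewrite !inE => /andP[/sub -> ->]. Qed.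

Definition preferred A (z : Z) := [set w in A | rk (Some w) < rk (Some z)].

Lemma in_preferred A z w : (w \in preferred A z) = (w \in A) && (rk (Some w) < rk (Some z)).
Proof. by rewrite inE. Qed.

Lemma preferred_empty A z w :
  #|preferred A z| < 1 -> w \in A -> rk (Some z) <= rk (Some w).
Proof.
rewrite ltnS leqn0 cards_eq0 => /eqP empty wA; rewrite leqNgt; apply/negP => wz.
by have := in_preferred A z w; rewrite empty inE wA wz.
Qed.

Lemma preferredS A B z : A \subset B -> preferred A z \subset preferred B z.
Proof. by move=> /subsetP AB; apply/subsetP => w; rewrite !inE => /andP[/AB -> ->]. Qed.

Lemma preferred_trans A w z :
  rk (Some w) < rk (Some z) -> preferred A w \subset preferred A z.
Proof.
by move=> wz; apply/subsetP => v; rewrite !inE => /andP[-> /ltn_trans ->].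
Qed.

Variable cap : nat.
Local Notation choice := (choice cap rk).

Lemma in_choice S z : (z \in choice S) =
  (z \in acceptable_in S) && (#|preferred (acceptable_in S) z| < cap).
Proof.
rewrite !inE -andbA; do 2!congr andb; congr (_ < _).
by apply: eq_card => w; rewrite !inE andbA.
Qed.

Lemma choice_acceptable S : choice S \subset acceptable_in S.
Proof. by apply/subsetP => z; rewrite in_choice => /andP[]. Qed.

Lemma choice_sub S : choice S \subset S.
Proof.
by apply: subset_trans (choice_acceptable S) _; apply/subsetP => z; rewrite inE => /andP[].
Qed.

Lemma card_preferred_choice S z : z \in choice S -> #|preferred (choice S) z| < cap.
Proof.
rewrite in_choice => /andP[_]; apply: leq_ltn_trans.
exact/subset_leq_card/preferredS/choice_acceptable.
Qed.

Lemma choice_substitutable S S' z :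
  z \in choice S -> S' \subset S -> z \in S' -> z \in choice S'.
Proof.
rewrite !in_choice => /andP[zA lt] sS' zS'.
have -> : z \in acceptable_in S' by move: zA; rewrite !inE zS' => /andP[_ ->].
by apply: leq_ltn_trans lt; apply/subset_leq_card/preferredS/acceptable_inS.
Qed.

Lemma card_preferred_choice_ge S z :
  cap <= #|preferred (acceptable_in S) z| -> cap <= #|preferred (choice S) z|.
Proof.
have [n] := ubnP (rk (Some z)); elim: n z => // n IHn z lt_z_n full_z.
have [sub | /subsetPn[w pw notin_w]] := boolP (preferred (acceptable_in S) z \subset choice S).
  apply: leq_trans full_z _; apply: subset_leq_card; apply/subsetP => w pw.
  by rewrite in_preferred (subsetP sub w pw); move: pw; rewrite in_preferred => /andP[].
move: (pw); rewrite in_preferred => /andP[Aw lt_wz].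
have full_w : cap <= #|preferred (acceptable_in S) w|.
  by move: notin_w; rewrite in_choice Aw -leqNgt.
apply: leq_trans (IHn w (leq_trans lt_wz lt_z_n) full_w) _.
exact/subset_leq_card/preferred_trans.
Qed.

Lemma card_preferred_rejected S z :
  z \in acceptable_in S -> z \notin choice S -> cap <= #|preferred (choice S) z|.
Proof. by rewrite in_choice => -> /=; rewrite -leqNgt => /card_preferred_choice_ge. Qed.

Lemma choice_transfer S S' z :
  z \in choice S -> z \in acceptable_in S' -> preferred (choice S') z \subset S ->
  z \in choice S'.
Proof.
move=> zS zS' sub; apply: contraT => /(card_preferred_rejected zS').
rewrite leqNgt => /negbTE <-; move: zS; rewrite in_choice => /andP[_].
apply/leq_ltn_trans/subset_leq_card/subsetP => w pw; have := subsetP sub w pw.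
move: pw; rewrite !in_preferred => /andP[/(subsetP (choice_acceptable S'))].
by rewrite !inE => /andP[_ ->] -> ->.
Qed.

End Preferred.

Section DeferredAcceptance.
Variables (X Y : finType).
Variables (capX : X -> nat) (rkX : X -> option Y -> nat).
Variables (capY : Y -> nat) (rkY : Y -> option X -> nat).
Implicit Types (R M : {set X * Y}) (x : X) (y : Y).

Definition available R x := [set y | (x, y) \notin R].
Definition partnersX M x := [set y | (x, y) \in M].
Definition partnersY M y := [set x | (x, y) \in M].

Lemma in_partnersX M x y : (y \in partnersX M x) = ((x, y) \in M).
Proof. by rewrite inE. Qed.

Lemma in_partnersY M x y : (x \in partnersY M y) = ((x, y) \in M).
Proof. by rewrite inE. Qed.

Lemma preferred_partnersX_sub (rk : option Y -> nat) M M' x y :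
  (forall y', (x, y') \in M -> rk (Some y') < rk (Some y) -> (x, y') \in M') ->
  preferred rk (partnersX M x) y \subset preferred rk (partnersX M' x) y.
Proof.
move=> sub; apply/subsetP => y'; rewrite !in_preferred !in_partnersX => /andP[xy' lt].
by rewrite lt (sub _ xy' lt).
Qed.

Local Notation proposals := (da_proposals capX rkX).
Local Notation held := (da_held capX rkX capY rkY).
Local Notation step := (da_step capX rkX capY rkY).
Local Notation rejections := (da_rejections capX rkX capY rkY).
Local Notation DA := (deferred_acceptance capX rkX capY rkY).

Lemma in_available R x y : (y \in available R x) = ((x, y) \notin R).
Proof. by rewrite inE. Qed.

Lemma in_proposals R x y :
  ((x, y) \in proposals R) = (y \in choice (capX x) (rkX x) (available R x)).
Proof. by rewrite inE. Qed.

Lemma in_held R x y :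
  ((x, y) \in held R) = (x \in choice (capY y) (rkY y) (partnersY (proposals R) y)).
Proof.
rewrite inE /=; case: (boolP (x \in _)) => [x_chosen|]; last by rewrite andbF.
by move: (subsetP (choice_sub _ _ _) _ x_chosen); rewrite inE => ->.
Qed.

Lemma held_proposals R : held R \subset proposals R.
Proof. by apply/subsetP => p; rewrite inE => /andP[]. Qed.

Lemma proposals_not_rejected R x y : (x, y) \in proposals R -> (x, y) \notin R.
Proof. by rewrite in_proposals => /(subsetP (choice_sub _ _ _)); rewrite inE. Qed.

Lemma in_da_step R p : (p \in step R) = (p \in R) || (p \in proposals R) && (p \notin held R).
Proof. by rewrite !inE andbC. Qed.

Lemma da_step_ext R : R \subset step R.
Proof. by apply/subsetP => p pR; rewrite in_da_step pR. Qed.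

Lemma held_proposals_step R : held R \subset proposals (step R).
Proof.
apply/subsetP => -[x y] xy_held; have xy_prop := subsetP (held_proposals R) _ xy_held.
move: (xy_prop); rewrite !in_proposals => /choice_substitutable; apply.
  by apply/subsetP => w; rewrite !in_available; apply/contra/subsetP/da_step_ext.
by rewrite in_available in_da_step (negbTE (proposals_not_rejected xy_prop)) xy_held andbF.
Qed.

Lemma da_rejections_fixed : step rejections = rejections.
Proof. by rewrite /da_rejections cardsT; apply: iter_ext_fixed (@da_step_ext). Qed.

Lemma da_rejections_ind (P : {set X * Y} -> Prop) : P set0 ->
  (forall R, R \subset rejections -> P R -> P (step R)) -> P rejections.
Proof. by rewrite /da_rejections cardsT; exact: (@iter_ext_ind _ _ (@da_step_ext) P). Qed.

Lemma in_da x y : ((x, y) \in DA) = ((x, y) \in proposals rejections).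
Proof.
apply/idP/idP => [|xy_prop]; first exact: (subsetP (held_proposals _)).
apply: contraT => xy_notheld; have := proposals_not_rejected xy_prop.
by rewrite -da_rejections_fixed in_da_step xy_prop xy_notheld orbT.
Qed.

Lemma da_not_rejected x y : (x, y) \in DA -> (x, y) \notin rejections.
Proof. by rewrite in_da => /proposals_not_rejected. Qed.

Lemma partnersX_da x : partnersX DA x = choice (capX x) (rkX x) (available rejections x).
Proof. by apply/setP => y; rewrite inE in_da in_proposals. Qed.

Lemma partnersY_da y :
  partnersY DA y = choice (capY y) (rkY y) (partnersY (proposals rejections) y).
Proof. by apply/setP => x; rewrite inE in_held. Qed.

Lemma da_acceptable x y : (x, y) \in DA ->
  rkX x (Some y) < rkX x None /\ rkY y (Some x) < rkY y None.
Proof.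
move=> xy; split; move: xy.
  rewrite -in_partnersX partnersX_da => /(subsetP (choice_acceptable _ _ _)).
  by rewrite in_acceptable_in => /andP[].
rewrite -in_partnersY partnersY_da => /(subsetP (choice_acceptable _ _ _)).
by rewrite in_acceptable_in => /andP[].
Qed.

Lemma da_capX x y : (x, y) \in DA -> #|preferred (rkX x) (partnersX DA x) y| < capX x.
Proof. by rewrite -in_partnersX partnersX_da; apply: card_preferred_choice. Qed.

Lemma da_capY x y : (x, y) \in DA -> #|preferred (rkY y) (partnersY DA y) x| < capY y.
Proof. by rewrite -in_partnersY partnersY_da; apply: card_preferred_choice. Qed.

Lemma da_unit_capX_rank x y y' : capX x = 1 -> (x, y) \in DA -> (x, y') \in DA ->
  rkX x (Some y) = rkX x (Some y').
Proof.
move=> cap1 xy xy'; apply/anti_leq/andP; split; apply: (preferred_empty (A := partnersX DA x));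
  by rewrite ?in_partnersX // -cap1 da_capX.
Qed.

Lemma da_unit_capY_rank x x' y : capY y = 1 -> (x, y) \in DA -> (x', y) \in DA ->
  rkY y (Some x) = rkY y (Some x').
Proof.
move=> cap1 xy x'y; apply/anti_leq/andP; split; apply: (preferred_empty (A := partnersY DA y));
  by rewrite ?in_partnersY // -cap1 da_capY.
Qed.

Lemma da_rejected_capY x y : (x, y) \in rejections -> rkY y (Some x) < rkY y None ->
  capY y <= #|preferred (rkY y) (partnersY DA y) x|.
Proof.
rewrite partnersY_da; move: x; elim/da_rejections_ind: rejections => [x|R _ IH x].
  by rewrite inE.
have held_acceptable : choice (capY y) (rkY y) (partnersY (proposals R) y) \subset
    acceptable_in (rkY y) (partnersY (proposals (step R)) y).
  apply/subsetP => x' x'_held; rewrite in_acceptable_in in_partnersY.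
  rewrite (subsetP (held_proposals_step R)) ?in_held //=.
  by move: (subsetP (choice_acceptable _ _ _) _ x'_held); rewrite in_acceptable_in => /andP[].
move=> xy_rej x_acc; apply: card_preferred_choice_ge.
apply: leq_trans _ (subset_leq_card (preferredS _ x held_acceptable)).
move: xy_rej; rewrite in_da_step => /orP[xy_rej | /andP[xy_prop xy_notheld]].
  exact: IH xy_rej x_acc.
apply: card_preferred_rejected; last by rewrite -in_held.
by rewrite in_acceptable_in in_partnersY xy_prop.
Qed.

Lemma da_unrejected x y : (x, y) \notin rejections -> rkX x (Some y) < rkX x None ->
  (x, y) \in DA \/ capX x <= #|preferred (rkX x) (partnersX DA x) y|.
Proof.
move=> xy_unrej y_acc; rewrite -in_partnersX partnersX_da.
have [|y_out] := boolP (y \in choice (capX x) (rkX x) (available rejections x)).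
  by left.
right.
by apply: card_preferred_rejected y_out; rewrite in_acceptable_in in_available xy_unrej.
Qed.

Lemma da_pairwise_stable x y :
  rkX x (Some y) < rkX x None -> rkY y (Some x) < rkY y None -> (x, y) \notin DA ->
  capX x <= #|preferred (rkX x) (partnersX DA x) y| \/
  capY y <= #|preferred (rkY y) (partnersY DA y) x|.
Proof.
move=> y_acc x_acc xy_out.
have [xy_rej | xy_unrej] := boolP ((x, y) \in rejections).
  by right; apply: da_rejected_capY.
by case: (da_unrejected xy_unrej y_acc) => [xy_in|]; [rewrite xy_in in xy_out | left].
Qed.

Lemma proposal_in_da R x y :
  (forall x' y', (x', y') \in R -> rkY y' (Some x') < rkY y' None -> (x', y') \in rejections) ->
  (x, y) \in proposals R -> (x, y) \notin rejections -> (x, y) \in DA.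
Proof.
move=> R_rej; rewrite in_proposals => y_prop xy_unrej; rewrite -in_partnersX partnersX_da.
apply: (choice_transfer y_prop).
  have := subsetP (choice_acceptable _ _ _) _ y_prop.
  by rewrite !in_acceptable_in !in_available xy_unrej => /andP[_ ->].
apply/subsetP => w; rewrite in_preferred -partnersX_da in_partnersX in_available.
move=> /andP[xw_da _].
by apply: contra (da_not_rejected xw_da) => /R_rej; apply; exact: (da_acceptable xw_da).2.
Qed.

(* A pair of T can only be rejected in favour of a proposer x' with a T-pair it
   prefers; as x' has moved on to a worse receiver, that T-pair was rejected
   earlier.  Hence no T-pair is ever rejected first. *)
Lemma da_never_rejects (T : {set X * Y}) :
  (forall x, capX x = 1) -> (forall y, 0 < capY y) ->
  (forall x y, (x, y) \in T -> rkY y (Some x) < rkY y None) ->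
  (forall x y x', (x, y) \in T ->
     rkY y (Some x') < rkY y None -> rkY y (Some x') < rkY y (Some x) ->
     rkX x' (Some y) < rkX x' None ->
     (forall y'', (x', y'') \in DA -> rkX x' (Some y) <= rkX x' (Some y'')) ->
     exists2 y', (x', y') \in T & rkX x' (Some y') < rkX x' (Some y)) ->
  forall x y, (x, y) \in T -> (x, y) \notin rejections.
Proof.
move=> capX1 capY_pos T_acc T_rival.
elim/da_rejections_ind: rejections => [x y|R R_sub IH x y xyT]; first by rewrite inE.
rewrite in_da_step negb_or IH //=; apply/negP => /andP[xy_prop xy_notheld].
have [x' x'_prop [x'_acc x'_better]] : exists2 x', (x', y) \in proposals R &
    rkY y (Some x') < rkY y None /\ rkY y (Some x') < rkY y (Some x).
  move: xy_notheld; rewrite in_held in_choice in_acceptable_in in_partnersY xy_prop T_acc //=.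
  rewrite -leqNgt => /(leq_trans (capY_pos y)) /card_gt0P[x'].
  by rewrite in_preferred in_acceptable_in in_partnersY => /andP[/andP[? ?] ?]; exists x'.
have y_acc : rkX x' (Some y) < rkX x' None.
  move: x'_prop; rewrite in_proposals => /(subsetP (choice_acceptable _ _ _)).
  by rewrite in_acceptable_in => /andP[].
have x'_best y' : (x', y') \notin R -> rkX x' (Some y') < rkX x' None ->
    rkX x' (Some y) <= rkX x' (Some y').
  move=> x'y'_unrej y'_acc.
  apply: (preferred_empty (A := acceptable_in (rkX x') (available R x'))).
    by move: x'_prop; rewrite in_proposals in_choice capX1 => /andP[_].
  by rewrite in_acceptable_in in_available x'y'_unrej.
have [y' x'y'T lt_y'y] : exists2 y', (x', y') \in T & rkX x' (Some y') < rkX x' (Some y).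
  apply: T_rival xyT x'_acc x'_better y_acc _ => y'' x'y''_da.
  apply: x'_best; last exact: (da_acceptable x'y''_da).1.
  by apply: contra (da_not_rejected x'y''_da); apply/subsetP.
by have := x'_best y' (IH x' y' x'y'T) (ltn_trans lt_y'y y_acc); rewrite leqNgt lt_y'y.
Qed.

End DeferredAcceptance.

Section MoreReceiverCapacity.
Variables (X Y : finType) (capX : X -> nat) (rkX : X -> option Y -> nat).
Variables (capY capY' : Y -> nat) (rkY : Y -> option X -> nat).
Hypothesis capY_le : forall y, capY y <= capY' y.

Local Notation DA := (deferred_acceptance capX rkX capY rkY).
Local Notation DA' := (deferred_acceptance capX rkX capY' rkY).
Local Notation rejections := (da_rejections capX rkX capY rkY).
Local Notation rejections' := (da_rejections capX rkX capY' rkY).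

Lemma rejections_more_capY x y :
  (x, y) \in rejections' -> rkY y (Some x) < rkY y None -> (x, y) \in rejections.
Proof.
move: x y; elim/da_rejections_ind: rejections' => [x y|R _ IH x y]; first by rewrite inE.
rewrite in_da_step => /orP[xy_R | /andP[xy_prop xy_notheld]] x_acc; first exact: IH.
apply: contraT => xy_unrej; have xy_da := proposal_in_da IH xy_prop xy_unrej.
set rivals := preferred (rkY y) (acceptable_in (rkY y) (partnersY (da_proposals capX rkX R) y)) x.
have full : capY' y <= #|rivals|.
  move: xy_notheld; rewrite in_held in_choice in_acceptable_in in_partnersY.
  by rewrite xy_prop x_acc -leqNgt.
have rivals_da : rivals \subset preferred (rkY y) (partnersY DA y) x.
  apply/subsetP => z; rewrite !in_preferred in_acceptable_in in_partnersY.
  move=> /andP[/andP[zy_prop z_acc] zx]; rewrite zx andbT in_partnersY.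
  apply: proposal_in_da IH zy_prop _; apply/negP => zy_rej.
  have sub := subset_leq_card (preferred_trans (partnersY DA y) zx).
  have := leq_ltn_trans (leq_trans (da_rejected_capY zy_rej z_acc) sub) (da_capY xy_da).
  by rewrite ltnn.
have := leq_trans (capY_le y) (leq_trans full (subset_leq_card rivals_da)).
by move/leq_ltn_trans/(_ (da_capY xy_da)); rewrite ltnn.
Qed.

Lemma da_more_capY_lost x y : (x, y) \in DA -> (x, y) \notin DA' ->
  capX x <= #|preferred (rkX x) (partnersX DA' x) y|.
Proof.
move=> xy_da xy_out; have [y_acc x_acc] := da_acceptable xy_da.
have xy_unrej : (x, y) \notin rejections'.
  by apply: contra (da_not_rejected xy_da) => /rejections_more_capY; apply.
by case: (da_unrejected xy_unrej y_acc) => [xy_in|//]; rewrite xy_in in xy_out.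
Qed.

End MoreReceiverCapacity.

Section Partners.
Variables (D H : finType).
Implicit Types (mu : {set D * H}) (d : D) (h : H).

Lemma partnerD_in mu d h : partnerD mu d = Some h -> (d, h) \in mu.
Proof. by rewrite /partnerD; case: pickP => // h' dh' [<-]. Qed.

Lemma partnerH_in mu d h : partnerH mu h = Some d -> (d, h) \in mu.
Proof. by rewrite /partnerH; case: pickP => // d' d'h [<-]. Qed.

Lemma matching_partnerD mu d h : is_matching mu -> (d, h) \in mu -> partnerD mu d = Some h.
Proof.
move=> [uniqD _] dh; rewrite /partnerD; case: pickP => [h' dh'|/(_ h)]; last by rewrite dh.
by rewrite (uniqD _ _ _ dh dh').
Qed.

Lemma matching_partnerH mu d h : is_matching mu -> (d, h) \in mu -> partnerH mu h = Some d.
Proof.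
move=> [_ uniqH] dh; rewrite /partnerH; case: pickP => [d' d'h|/(_ d)]; last by rewrite dh.
by rewrite (uniqH _ _ _ dh d'h).
Qed.

End Partners.

Section Interviews.
Variables (D H : finType) (PH : H -> option D -> nat) (PD : D -> option H -> nat).
Variable iota : H -> nat.
Implicit Types (d : D) (h : H).

Local Notation nu k := (interview_matching PH PD iota k).

Lemma interview_acceptable k h d : (h, d) \in nu k ->
  PH h (Some d) < PH h None /\ PD d (Some h) < PD d None.
Proof. exact: da_acceptable. Qed.

Variables (kappa kappa' : D -> nat).
Hypothesis kappa_le : forall d, kappa d <= kappa' d.

Lemma interview_kept h e d : (h, e) \in nu kappa -> (h, d) \in nu kappa' ->
  PH h (Some e) < PH h (Some d) -> (h, e) \in nu kappa'.
Proof.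
move=> he hd lt_ed; apply: contraT => he_out.
have h_full := da_more_capY_lost kappa_le he he_out.
have sub := subset_leq_card (preferred_trans (partnersX (nu kappa') h) lt_ed).
by have := leq_ltn_trans (leq_trans h_full sub) (da_capX hd); rewrite ltnn.
Qed.

Lemma interview_persists h d g : (h, d) \in nu kappa' -> (g, d) \in nu kappa ->
  PD d (Some h) < PD d (Some g) -> (h, d) \in nu kappa.
Proof.
move=> hd' gd lt_hg; apply: contraT => hd_out; have [d_acc h_acc] := interview_acceptable hd'.
case: (da_pairwise_stable d_acc h_acc hd_out) => [h_full | d_full].
  have sub : preferred (PH h) (partnersX (nu kappa) h) d \subset
             preferred (PH h) (partnersX (nu kappa') h) d.
    by apply: preferred_partnersX_sub => e he lt_ed; apply: interview_kept he hd' lt_ed.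
  by have := leq_ltn_trans (leq_trans h_full (subset_leq_card sub)) (da_capX hd'); rewrite ltnn.
have sub := subset_leq_card (preferred_trans (partnersY (nu kappa) d) lt_hg).
by have := leq_ltn_trans (leq_trans d_full sub) (da_capY gd); rewrite ltnn.
Qed.

End Interviews.

Section FinalMatching.
Variables (D H : finType) (PH : H -> option D -> nat) (PD : D -> option H -> nat).
Hypothesis strictH : forall h, injective (PH h).
Hypothesis strictD : forall d, injective (PD d).
Variable nu : {set H * D}.
Hypothesis nu_acceptable : forall h d, (h, d) \in nu ->
  PH h (Some d) < PH h None /\ PD d (Some h) < PD d None.
Implicit Types (d : D) (h : H).

Local Notation rD := (restrictD PD nu).
Local Notation rH := (restrictH PH nu).
Local Notation mu := (deferred_acceptance (fun _ => 1) rD (fun _ => 1) rH).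

Lemma restrictD_in h d : (h, d) \in nu -> rD d (Some h) = PD d (Some h).
Proof. by rewrite /restrictD => ->. Qed.

Lemma restrictH_in h d : (h, d) \in nu -> rH h (Some d) = PH h (Some d).
Proof. by rewrite /restrictH => ->. Qed.

Lemma restrictD_acceptable h d :
  (rD d (Some h) < rD d None) = ((h, d) \in nu) && (PD d (Some h) < PD d None).
Proof. by rewrite /restrictD; case: ifP => //= _; rewrite -addnA ltnNge leq_addr. Qed.

Lemma restrictH_acceptable h d :
  (rH h (Some d) < rH h None) = ((h, d) \in nu) && (PH h (Some d) < PH h None).
Proof. by rewrite /restrictH; case: ifP => //= _; rewrite -addnA ltnNge leq_addr. Qed.

Lemma interview_restricted_acceptable h d : (h, d) \in nu ->
  rD d (Some h) < rD d None /\ rH h (Some d) < rH h None.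
Proof.
move=> hd; have [d_acc h_acc] := nu_acceptable hd.
by rewrite restrictD_acceptable restrictH_acceptable hd d_acc h_acc.
Qed.

Lemma matched_interviewed d h : (d, h) \in mu -> (h, d) \in nu.
Proof. by move/da_acceptable => [+ _]; rewrite restrictD_acceptable => /andP[]. Qed.

Lemma matched_acceptable d h : (d, h) \in mu -> PD d (Some h) < PD d None.
Proof. by move/matched_interviewed/nu_acceptable => []. Qed.

Lemma final_is_matching : is_matching mu.
Proof.
split=> [d h h' | h d d'] m1 m2.
  have := da_unit_capX_rank erefl m1 m2.
  by rewrite !restrictD_in ?(matched_interviewed m1) ?(matched_interviewed m2) // => /strictD [].
have := da_unit_capY_rank erefl m1 m2.
by rewrite !restrictH_in ?(matched_interviewed m1) ?(matched_interviewed m2) // => /strictH [].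
Qed.

Lemma interviewed_stable h d d' : (h, d') \in nu -> (d, h) \in mu ->
  PH h (Some d') < PH h (Some d) ->
  exists2 g, (d', g) \in mu & PD d' (Some g) < PD d' (Some h).
Proof.
move=> hd' dh lt_d'd; have [d'_acc h_acc] := interview_restricted_acceptable hd'.
have d'h_out : (d', h) \notin mu.
  by apply/negP => d'h; rewrite (final_is_matching.2 _ _ _ dh d'h) ltnn in lt_d'd.
case: (da_pairwise_stable d'_acc h_acc d'h_out) => /card_gt0P[z];
  rewrite in_preferred ?in_partnersX ?in_partnersY => /andP[zM].
  by exists z; rewrite // -(restrictD_in hd') -(restrictD_in (matched_interviewed zM)).
rewrite -(final_is_matching.2 _ _ _ dh zM) (restrictH_in (matched_interviewed dh)).
by rewrite (restrictH_in hd') => /(ltn_trans lt_d'd); rewrite ltnn.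
Qed.

End FinalMatching.

(* [nu] and [nu'] stand for the interview matchings for [kappa <= kappa'] and
   [mu'] for the (iota, kappa')-matching. *)
Section BetterOff.
Variables (D H : finType) (PH : H -> option D -> nat) (PD : D -> option H -> nat).
Hypothesis strictH : forall h, injective (PH h).
Hypothesis strictD : forall d, injective (PD d).
Variables (nu nu' : {set H * D}) (mu' : {set D * H}).
Hypothesis nu_acceptable : forall h d, (h, d) \in nu ->
  PH h (Some d) < PH h None /\ PD d (Some h) < PD d None.
Hypothesis nu'_acceptable : forall h d, (h, d) \in nu' ->
  PH h (Some d) < PH h None /\ PD d (Some h) < PD d None.
Hypothesis interviews_kept : forall h e d, (h, e) \in nu -> (h, d) \in nu' ->
  PH h (Some e) < PH h (Some d) -> (h, e) \in nu'.
Hypothesis interviews_persist : forall h d g, (h, d) \in nu' -> (g, d) \in nu ->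
  PD d (Some h) < PD d (Some g) -> (h, d) \in nu.
Hypothesis mu'_matching : is_matching mu'.
Hypothesis mu'_interviewed : forall d h, (d, h) \in mu' -> (h, d) \in nu'.
Hypothesis mu'_stable : forall h d d', (h, d') \in nu' -> (d, h) \in mu' ->
  PH h (Some d') < PH h (Some d) ->
  exists2 g, (d', g) \in mu' & PD d' (Some g) < PD d' (Some h).
Implicit Types (d : D) (h : H).

Local Notation rD := (restrictD PD nu).
Local Notation rH := (restrictH PH nu).
Local Notation mu := (deferred_acceptance (fun _ => 1) rD (fun _ => 1) rH).
Hypothesis mu_stable : stable PH PD mu.

Let mu_matching : is_matching mu := final_is_matching strictH strictD nu.

Definition better_off := [set d | PD d (partnerD mu' d) < PD d (partnerD mu d)].

Lemma in_better_off d : (d \in better_off) = (PD d (partnerD mu' d) < PD d (partnerD mu d)).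
Proof. by rewrite inE. Qed.

Lemma better_off_matched' d : d \in better_off -> exists h, (d, h) \in mu'.
Proof.
rewrite in_better_off; case E': (partnerD mu' d) => [h|]; first by exists h; apply: partnerD_in.
case E: (partnerD mu d) => [g|]; last by rewrite ltnn.
by rewrite ltnNge ltnW // (matched_acceptable nu_acceptable (partnerD_in E)).
Qed.

Lemma better_off_partner d h : d \in better_off -> (d, h) \in mu' ->
  PD d (Some h) < PD d (partnerD mu d).
Proof. by rewrite in_better_off => + dh; rewrite (matching_partnerD mu'_matching dh). Qed.

Lemma better_off_displaced d h : d \in better_off -> (d, h) \in mu' ->
  exists2 d', (d', h) \in mu & d' \in better_off.
Proof.
move=> dS dh'; have lt_hmu := better_off_partner dS dh'.
have hd' := mu'_interviewed dh'; have [d_acc _] := nu'_acceptable hd'.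
have := mu_stable.2 d h; rewrite /blocks lt_hmu /= -leqNgt.
case E: (partnerH mu h) => [d'|]; last by rewrite leqNgt d_acc.
move=> le_d'd; have d'h := partnerH_in E.
have lt_d'd : PH h (Some d') < PH h (Some d).
  rewrite ltn_neqAle le_d'd andbT; apply: contraTneq lt_hmu => /strictH [d'_eq]; subst d'.
  by rewrite (matching_partnerD mu_matching d'h) ltnn.
have hd'_nu' := interviews_kept (matched_interviewed d'h) hd' lt_d'd.
have [g d'g lt_gh] := mu'_stable hd'_nu' dh' lt_d'd.
exists d' => //; rewrite in_better_off (matching_partnerD mu'_matching d'g).
by rewrite (matching_partnerD mu_matching d'h).
Qed.

Lemma better_off_matched d : d \in better_off -> exists h, (d, h) \in mu.
Proof.
(* [next] injects [better_off] into itself, hence onto it. *)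
pose next d0 := odflt d0 (obind (partnerH mu) (partnerD mu' d0)).
have next_spec d0 : d0 \in better_off ->
    exists2 h, (d0, h) \in mu' & (next d0, h) \in mu /\ next d0 \in better_off.
  move=> d0S; have [h d0h'] := better_off_matched' d0S.
  have [d1 d1h d1S] := better_off_displaced d0S d0h'.
  exists h; rewrite // /next (matching_partnerD mu'_matching d0h') /=.
  by rewrite (matching_partnerH mu_matching d1h).
have next_inj : {in better_off &, injective next}.
  move=> d1 d2 /next_spec[h1 d1h1' [d1h1 _]] /next_spec[h2 d2h2' [d2h2 _]] e.
  rewrite e in d1h1; rewrite (mu_matching.1 _ _ _ d1h1 d2h2) in d1h1'.
  exact: mu'_matching.2 _ _ _ d1h1' d2h2'.
have next_onto : next @: better_off = better_off.
  apply/eqP; rewrite eqEcard card_in_imset // leqnn andbT.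
  by apply/subsetP => _ /imsetP[d0 /next_spec[h _ [_ ?]] ->].
move=> dS; have : d \in next @: better_off by rewrite next_onto.
by case/imsetP => d0 /next_spec[h _ [? _]] ->; exists h.
Qed.

Lemma better_off_interviewed d h : d \in better_off -> (d, h) \in mu' -> (h, d) \in nu.
Proof.
move=> dS dh'; have [g dg] := better_off_matched dS.
apply: interviews_persist (mu'_interviewed dh') (matched_interviewed dg) _.
by have := better_off_partner dS dh'; rewrite (matching_partnerD mu_matching dg).
Qed.

Lemma better_off_rival d h g : (h, d) \in nu -> (d, g) \in mu' ->
  PD d (Some g) < PD d (Some h) ->
  (forall g', (d, g') \in mu -> PD d (Some h) <= PD d (Some g')) -> d \in better_off.
Proof.
move=> hd dg' lt_gh h_best; rewrite in_better_off (matching_partnerD mu'_matching dg').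
case E: (partnerD mu d) => [g'|]; first exact: leq_trans lt_gh (h_best g' (partnerD_in E)).
exact: ltn_trans lt_gh (nu_acceptable hd).2.
Qed.

Lemma better_off_never_rejected d h : d \in better_off -> (d, h) \in mu' ->
  (d, h) \notin da_rejections (fun _ => 1) rD (fun _ => 1) rH.
Proof.
move=> dS dh'; set T := [set p | (p.1 \in better_off) && (p \in mu')].
have T_interviewed d0 h0 : (d0, h0) \in T -> (h0, d0) \in nu.
  by rewrite inE => /andP[]; apply: better_off_interviewed.
apply: (da_never_rejects (T := T)) => //; last by rewrite inE dS dh'.
  by move=> d0 h0 /T_interviewed /(interview_restricted_acceptable nu_acceptable) [].
move=> d0 h0 d' d0h0 d'_acc lt_d'd0 _ h0_best.
have h0d0 := T_interviewed _ _ d0h0; move: d0h0; rewrite inE => /andP[_ d0h0'].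
move: d'_acc; rewrite restrictH_acceptable => /andP[h0d' _].
move: lt_d'd0; rewrite (restrictH_in PH h0d') (restrictH_in PH h0d0) => lt_d'd0.
have h0d'_nu' := interviews_kept h0d' (mu'_interviewed d0h0') lt_d'd0.
have [g d'g lt_gh0] := mu'_stable h0d'_nu' d0h0' lt_d'd0.
have d'S : d' \in better_off.
  apply: (better_off_rival h0d' d'g lt_gh0) => g' d'g'.
  by rewrite -(restrictD_in PD h0d') -(restrictD_in PD (matched_interviewed d'g')) h0_best.
exists g; first by rewrite inE d'S d'g.
by rewrite (restrictD_in PD h0d') (restrictD_in PD (better_off_interviewed d'S d'g)).
Qed.

Lemma better_off_empty : better_off = set0.
Proof.
apply/setP => d; rewrite in_set0; apply/negP => dS.
have [h dh'] := better_off_matched' dS; have hd := better_off_interviewed dS dh'.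
have lt_hmu := better_off_partner dS dh'.
have h_acc := (interview_restricted_acceptable nu_acceptable hd).1.
case: (da_unrejected (better_off_never_rejected dS dh') h_acc).
  by move=> dh; rewrite (matching_partnerD mu_matching dh) ltnn in lt_hmu.
move=> /card_gt0P[w]; rewrite in_preferred in_partnersX => /andP[dw].
rewrite (restrictD_in PD (matched_interviewed dw)) (restrictD_in PD hd) => lt_wh.
by have := ltn_trans lt_wh lt_hmu; rewrite (matching_partnerD mu_matching dw) ltnn.
Qed.

End BetterOff.

Theorem theorem1 (D H : finType)
  (PH : H -> option D -> nat) (PD : D -> option H -> nat)
  (hD : 2 <= #|D|) (hH : 2 <= #|H|)
  (strictH : forall h, injective (PH h)) (strictD : forall d, injective (PD d))
  (iota : H -> nat) (kappa kappa' : D -> nat) :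
  adequate PH PD iota kappa ->
  (forall d, kappa d <= kappa' d) ->
  forall d,
    PD d (partnerD (iota_kappa_matching PH PD iota kappa) d)
    <= PD d (partnerD (iota_kappa_matching PH PD iota kappa') d).
Proof.
move=> adequate_kappa kappa_le d; rewrite leqNgt.
have nu_acceptable := @interview_acceptable D H PH PD iota.
have := better_off_empty strictH strictD (nu_acceptable kappa) (nu_acceptable kappa')
  (interview_kept kappa_le) (interview_persists kappa_le)
  (final_is_matching strictH strictD _) (@matched_interviewed _ _ _ _ _)
  (interviewed_stable strictH strictD (nu_acceptable kappa')) adequate_kappa.
by move/setP/(_ d); rewrite in_better_off in_set0 => ->.
Qed.
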